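(* Let $\min\{c^Tx : Ax=b,\ Bx\le d\}$ be a linear program over a pointed polyhedron $P=\{x\in\mathbb R^n : Ax=b,\ Bx\le d\}$, with feasible solution $x_0$. Then a steepest-descent circuit direction $g$ at $x_0$ satisfies $c^Tg/\|Bg\|_1\le c^Tu/\|Bu\|_1$ for every (nonzero) feasible direction $u$ at $x_0$.
   Context: $P$ is pointed means $\operatorname{rank}\binom{A}{B}=n$. The set of circuits $\mathcal C(A,B)$ consists of all $g\in\ker(A)\setminus\{0\}$ normalized to coprime integer components such that no $x\in\ker(A)\setminus\{0\}$ satisfies $\operatorname{supp}(Bx)\subsetneq\operatorname{supp}(Bg)$. A direction $u$ is (strictly) feasible at $x_0$ if $x_0+\alpha u\in P$ for some $\alpha>0$. A steepest-descent circuit at $x_0$ is a circuit $g\in\mathcal C(A,B)$ strictly feasible at $x_0$ that minimizes $c^Tg/\|Bg\|_1$ over all such circuits; a steepest-descent circuit direction is a positive multiple of one. *)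

From HB Require Import structures.
From mathcomp Require Import all_boot all_order all_algebra.
Set Implicit Arguments. Unset Strict Implicit. Unset Printing Implicit Defensive.
Import Order.TTheory GRing.Theory Num.Theory.
Local Open Scope ring_scope.

Section LP.
Variables (R : realFieldType) (mA mB n : nat).
Variables (A : 'M[rat]_(mA, n)) (B : 'M[rat]_(mB, n)).
Variables (b : 'cV[R]_mA) (d : 'cV[R]_mB) (c : 'cV[R]_n).

Definition AR : 'M[R]_(mA, n) := map_mx ratr A.
Definition BR : 'M[R]_(mB, n) := map_mx ratr B.

Definition in_P (x : 'cV[R]_n) : Prop :=
  AR *m x = b /\ forall i : 'I_mB, (BR *m x) i 0 <= d i 0.

Definition pointed : Prop := \rank (col_mx A B) = n.

Definition supp m (v : 'cV[R]_m) : {set 'I_m} := [set i | v i 0 != 0].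

Definition norm1 m (v : 'cV[R]_m) : R := \sum_i `|v i 0|.

Definition dotc (v : 'cV[R]_n) : R := \sum_i c i 0 * v i 0.

Definition obj_ratio (v : 'cV[R]_n) : R := dotc v / norm1 (BR *m v).

Definition intvR (g : 'cV[int]_n) : 'cV[R]_n := map_mx intr g.

Definition is_circuit (g : 'cV[int]_n) : Prop :=
  [/\ g != 0, AR *m intvR g = 0,
      \big[gcdz/0]_(i < n) g i 0 = 1 &
      ~ exists x : 'cV[R]_n, [/\ AR *m x = 0, x != 0 &
                               supp (BR *m x) \proper supp (BR *m intvR g)]].

Definition feasible_dir (x0 u : 'cV[R]_n) : Prop :=
  exists alpha : R, 0 < alpha /\ in_P (x0 + alpha *: u).

Definition steepest_descent_circuit (x0 : 'cV[R]_n) (g : 'cV[int]_n) : Prop :=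
  [/\ is_circuit g, feasible_dir x0 (intvR g) &
      forall h : 'cV[int]_n, is_circuit h -> feasible_dir x0 (intvR h) ->
        obj_ratio (intvR g) <= obj_ratio (intvR h)].

Definition steepest_descent_circuit_direction (x0 v : 'cV[R]_n) : Prop :=
  exists (g : 'cV[int]_n) (lam : R),
    [/\ steepest_descent_circuit x0 g, 0 < lam & v = lam *: intvR g].
End LP.

From HB Require Import structures.
From mathcomp Require Import all_boot all_order all_algebra.
From mathcomp Require Import ring lra.
From Stdlib Require Import Classical_Prop.
Set Implicit Arguments. Unset Strict Implicit. Unset Printing Implicit Defensive.
Import Order.TTheory GRing.Theory Num.Theory.
Local Open Scope ring_scope.

(* Let r be the objective ratio of the steepest-descent circuit.  The kernel
   vectors x of A whose image Bx conforms to Bu (same sign as Bu wherever it is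
   nonzero) are feasible directions at x0, and on them the linear functional
   L x = c^T x - r sg(Bu)^T B x equals c^T x - r ||Bx||_1.  Such an x is generated
   by the elementary (support-minimal) kernel vectors conforming to it: when x is
   not elementary, a kernel vector y of smaller support gives x = q + t y, or
   (s + t) x = s q + t p, with q and p conforming to x and of smaller support.
   An elementary vector spans a line cut out by rational equations, so it is a
   positive multiple of a circuit and L is nonnegative on it by the choice of r.
   Hence L u >= 0, that is r <= c^T u / ||Bu||_1. *)

Lemma mxrank_lt_colP (F : fieldType) m n (M : 'M[F]_(m, n)) :
  reflect (exists2 z : 'cV_n, z != 0 & M *m z = 0) (\rank M < n)%N.
Proof.
rewrite ltn_neqAle rank_leq_col andbT -(mxrank_tr M) -/(row_free M^T).
apply: (iffP idP) => [|[z z_neq0 Mz]].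
  rewrite -kermx_eq0 -nz_row_eq0 => nzK.
  exists (nz_row (kermx M^T))^T; first by rewrite trmx_eq0.
  apply/trmx_inj; rewrite trmx_mul trmxK trmx0; apply/eqP.
  by rewrite -sub_kermx nz_row_sub.
apply: contraNN z_neq0 => /row_free_inj freeMT; rewrite -trmx_eq0; apply/eqP.
by apply: freeMT; rewrite /= -trmx_mul Mz trmx0 mul0mx.
Qed.

Lemma big_gcdz_abs n (f : 'I_n -> int) :
  \big[gcdz/0]_i f i = (\big[gcdn/0%N]_i `|f i|%N)%:Z.
Proof. by elim/big_rec2: _ => // i y1 y2 _ ->. Qed.

Lemma big_gcdzN n (f : 'I_n -> int) :
  \big[gcdz/0]_i - f i = \big[gcdz/0]_i f i.
Proof. by rewrite !big_gcdz_abs; under eq_bigr do rewrite abszN. Qed.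

Lemma int_vec_primitive n (w : 'cV[int]_n) : w != 0 ->
  exists h : 'cV[int]_n, exists2 G : int, 0 < G &
    w = G *: h /\ \big[gcdz/0]_i h i 0 = 1.
Proof.
move=> w_neq0; pose G := \big[gcdn/0%N]_i absz (w i 0).
have G_dvd i : dvdn G (absz (w i 0)) by apply: (biggcdn_inf i).
have G_gt0 : (0 < G)%N.
  rewrite lt0n; apply: contraNneq w_neq0 => G0; apply/eqP/matrixP => i j.
  by rewrite ord1 mxE; apply/eqP; have := G_dvd i; rewrite G0 dvd0n absz_eq0.
pose h := \col_i divz (w i 0) G.
have w_Gh : w = G%:Z *: h.
  apply/matrixP => i j; rewrite ord1 !mxE mulrC divzK //.
  by rewrite dvdzE.
exists h, G%:Z => //; split => //.
rewrite big_gcdz_abs; congr Posz; apply/eqP.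
rewrite -(eqn_pmul2l G_gt0) muln1 big_distrr /=; apply/eqP; apply: eq_bigr => i _.
by rewrite [in RHS]w_Gh !mxE abszM.
Qed.

Lemma rat_vec_int_multiple n (z : 'cV[rat]_n) :
  exists w : 'cV[int]_n, exists2 D : int, 0 < D & map_mx intr w = D%:~R *: z.
Proof.
pose D := \prod_i denq (z i 0).
pose w := \col_i (numq (z i 0) * \prod_(k | k != i) denq (z k 0)).
exists w, D; first by apply: prodr_gt0 => i _; exact: denq_gt0.
apply/matrixP => i j; by rewrite ord1 !mxE /D [in RHS](bigD1 i) //= !intrM numqE; ring.
Qed.

Lemma rat_vec_primitive_multiple (R : realFieldType) n (z : 'cV[rat]_n) :
  z != 0 -> exists h : 'cV[int]_n, exists2 k : R, 0 < k &
    map_mx ratr z = k *: intvR R h /\ \big[gcdz/0]_i h i 0 = 1.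
Proof.
move=> z_neq0; have [w [D D_gt0 wDz]] := rat_vec_int_multiple z.
have D_neq0 : D%:~R != 0 :> rat by rewrite intr_eq0 gt_eqF.
have w_neq0 : w != 0.
  apply: contraNneq z_neq0 => w0; move: wDz; rewrite w0 map_mx0 => /esym/eqP.
  by rewrite scaler_eq0 (negbTE D_neq0).
have [h [G G_gt0 [w_Gh gcd_h]]] := int_vec_primitive w_neq0.
exists h, (G%:~R / D%:~R); first by rewrite divr_gt0 ?ltr0z.
split=> //; apply/matrixP => i j.
have := congr1 (fun M : 'cV[rat]_n => ratr (M i j) : R) wDz.
rewrite w_Gh !mxE !rmorphM /= !ratr_int => wz.
have DR_neq0 : D%:~R != 0 :> R by rewrite intr_eq0 gt_eqF.
by rewrite -[ratr _](mulKf DR_neq0) -wz mulrCA mulrA.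
Qed.

Section Conformal.
Variable R : realFieldType.
Implicit Types (m : nat).

Definition conform m (v w : 'cV[R]_m) : Prop :=
  forall j, (w j 0 = 0 -> v j 0 = 0) /\ 0 <= v j 0 * w j 0.

Lemma conform_refl m (w : 'cV[R]_m) : conform w w.
Proof. by move=> j; rewrite -expr2 sqr_ge0. Qed.

Lemma conform_trans m (v w z : 'cV[R]_m) : conform v w -> conform w z -> conform v z.
Proof.
move=> vw wz j; have [w0v vw_ge0] := vw j; have [z0w wz_ge0] := wz j.
split=> [/z0w/w0v //|]; have [/w0v ->|w_neq0] := eqVneq (w j 0) 0; first by rewrite mul0r.
have ww_gt0 : 0 < w j 0 * w j 0 by rewrite -expr2 exprn_even_gt0.
nra.
Qed.

Lemma conformZ m k (v w : 'cV[R]_m) : 0 <= k -> conform v w -> conform (k *: v) w.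
Proof.
move=> k_ge0 vw j; have [w0v vw_ge0] := vw j; rewrite mxE -mulrA mulr_ge0 //.
by split=> // /w0v ->; rewrite mulr0.
Qed.

Lemma conform_sum_sg m (v w : 'cV[R]_m) :
  conform v w -> \sum_j Num.sg (w j 0) * v j 0 = norm1 v.
Proof.
move=> vw; apply: eq_bigr => j _; have [w0v vw_ge0] := vw j.
have [w_gt0|w_lt0|/w0v ->] := ltrgt0P (w j 0); last by rewrite normr0 mulr0.
- by rewrite gtr0_sg // mul1r ger0_norm // -(pmulr_lge0 _ w_gt0).
- by rewrite ltr0_sg // mulN1r ler0_norm // -(nmulr_lge0 _ w_lt0).
Qed.

Lemma supp_eq0 m (v : 'cV[R]_m) : (supp v == set0) = (v == 0).
Proof.
apply/eqP/eqP => [v0|->]; last by apply/setP => i; rewrite !inE mxE eqxx.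
apply/matrixP => i j; rewrite ord1 mxE; apply/eqP.
by have := in_set0 i; rewrite -v0 inE => /negbFE.
Qed.

Lemma supp_subset0 m (v w : 'cV[R]_m) i :
  supp v \subset supp w -> w i 0 = 0 -> v i 0 = 0.
Proof.
move=> /subsetP/(_ i); rewrite !inE => vw wi0; apply/eqP/negbNE/negP => /vw.
by rewrite wi0 eqxx.
Qed.

Lemma suppN m (v : 'cV[R]_m) : supp (- v) = supp v.
Proof. by apply/setP => i; rewrite !inE mxE oppr_eq0. Qed.

Lemma suppZ m k (v : 'cV[R]_m) : k != 0 -> supp (k *: v) = supp v.
Proof. by move=> k_neq0; apply/setP => i; rewrite !inE mxE mulf_eq0 negb_or k_neq0. Qed.

Lemma colBZE m (v w : 'cV[R]_m) t i : (v - t *: w) i 0 = v i 0 - t * w i 0.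
Proof. by rewrite !mxE. Qed.

Lemma colDZE m (v w : 'cV[R]_m) t i : (v + t *: w) i 0 = v i 0 + t * w i 0.
Proof. by rewrite !mxE. Qed.

Lemma sum_mulDZ m (f : 'I_m -> R) (v w : 'cV[R]_m) t :
  \sum_i f i * (v + t *: w) i 0 = \sum_i f i * v i 0 + t * \sum_i f i * w i 0.
Proof.
by rewrite mulr_sumr -big_split; apply: eq_bigr => i _; rewrite colDZE mulrDr mulrCA.
Qed.

Lemma norm1_gt0 m (v : 'cV[R]_m) : (0 < norm1 v) = (v != 0).
Proof.
rewrite lt_def sumr_ge0 // andbT; congr negb; apply/eqP/eqP => [|->]; last first.
  by rewrite /norm1 big1 // => i _; rewrite mxE normr0.
move=> /psumr_eq0P v0; apply/matrixP => i j; rewrite ord1 mxE.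
by apply/normr0_eq0/v0.
Qed.

Lemma conform_scale_bound m (v w : 'cV[R]_m) :
  conform v w -> exists2 t, 0 < t & forall j, t * `|v j 0| <= `|w j 0|.
Proof.
move=> vw; pose T := 1 + \sum_j `|v j 0| / `|w j 0|.
have T_ge1 : 1 <= T by rewrite lerDl sumr_ge0 // => j _; rewrite divr_ge0.
have T_gt0 : 0 < T by apply: lt_le_trans T_ge1.
exists T^-1 => [|j]; first by rewrite invr_gt0.
have [w0|w_neq0] := eqVneq (w j 0) 0; first by rewrite (vw j).1 // !normr0 mulr0.
rewrite mulrC ler_pdivrMr // -ler_pdivrMl ?normr_gt0 // mulrC.
rewrite /T (bigD1 j) //= addrCA lerDl addr_ge0 //.
by rewrite sumr_ge0 // => i _; rewrite divr_ge0.
Qed.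

Lemma conform_shrink m (X Y : 'cV[R]_m) j0 :
  supp Y \subset supp X -> 0 < X j0 0 * Y j0 0 ->
  exists2 t, 0 < t & conform (X - t *: Y) X /\ supp (X - t *: Y) \proper supp X.
Proof.
move=> sYX XY_gt0; pose P := [pred j | 0 < X j 0 * Y j 0].
(* the step t is the smallest ratio X_j / Y_j over the coordinates where X and Y
   agree in sign: it keeps X - t Y sign-compatible with X and kills coordinate jm *)
have [jm Pjm F_min] := @arg_minP _ R _ j0 P (fun j => X j 0 / Y j 0) XY_gt0.
set t := X jm 0 / Y jm 0 in F_min *.
have Y_neq0 j : P j -> Y j 0 != 0.
  by rewrite inE; apply: contraTneq => ->; rewrite mulr0 ltxx.
have FY j : P j -> X j 0 / Y j 0 * Y j 0 = X j 0 by move=> Pj; rewrite divfK ?Y_neq0.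
have t_gt0 : 0 < t.
  have YY_gt0 : 0 < Y jm 0 * Y jm 0 by rewrite -expr2 exprn_even_gt0 // Y_neq0.
  by rewrite -(pmulr_lgt0 _ YY_gt0) mulrA FY.
have QX : conform (X - t *: Y) X.
  move=> j; rewrite colBZE; split=> [X0|].
    by rewrite X0 (supp_subset0 sYX) // mulr0 subrr.
  have [Pj|] := boolP (P j); last first.
    rewrite inE -leNgt => XY_le0.
    have XX_ge0 : 0 <= X j 0 * X j 0 by rewrite -expr2 sqr_ge0.
    have : t * (X j 0 * Y j 0) <= 0 by rewrite mulr_ge0_le0 // ltW.
    nra.
  rewrite -[in X j 0 - _](FY j Pj) -mulrBl -mulrA mulr_ge0 ?subr_ge0 ?F_min //.
  by rewrite mulrC ltW.
exists t => //; split=> //; apply/properP; split.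
  by apply/subsetP => j; rewrite !inE; apply: contra => /eqP /(QX j).1 ->.
exists jm; rewrite !inE.
  by apply: contraTneq Pjm => X0; rewrite inE X0 mul0r ltxx.
by rewrite negbK colBZE -(FY jm Pjm) subrr.
Qed.

End Conformal.

Section ElementaryVectors.
Variables (R : realFieldType) (k m n : nat) (A : 'M[R]_(k, n)) (B : 'M[R]_(m, n)).
Hypothesis AB_inj : forall y : 'cV[R]_n, A *m y = 0 -> B *m y = 0 -> y = 0.

Definition elementary (x : 'cV[R]_n) : Prop :=
  [/\ A *m x = 0, x != 0 &
      ~ exists y, [/\ A *m y = 0, y != 0 & supp (B *m y) \proper supp (B *m x)]].

Lemma ker_supp_neq0 y : A *m y = 0 -> y != 0 -> supp (B *m y) != set0.
Proof. by move=> Ay; apply: contraNneq => /eqP; rewrite supp_eq0 => /eqP /(AB_inj Ay) ->. Qed.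

Lemma elementary_multiple x z : elementary x -> A *m z = 0 ->
  supp (B *m z) \subset supp (B *m x) -> exists mu, z = mu *: x.
Proof.
move=> [Ax x_neq0 x_min] Az zx.
have /set0Pn [j xj] := ker_supp_neq0 Ax x_neq0.
pose mu := (B *m z) j 0 / (B *m x) j 0; exists mu.
apply/eqP; rewrite -subr_eq0; apply: contraT => y_neq0; case: x_min.
exists (z - mu *: x); split=> //; first by rewrite mulmxBr -scalemxAr Az Ax scaler0 subrr.
rewrite mulmxBr -scalemxAr; apply/properP; split.
  apply/subsetP => i; rewrite !inE colBZE; apply: contraNneq => Bx0.
  by rewrite Bx0 mulr0 subr0 (supp_subset0 zx).
exists j => //; rewrite !inE colBZE negbK divfK ?subrr //.
by move: xj; rewrite inE.
Qed.

Lemma elementaryZ t x : t != 0 -> elementary x -> elementary (t *: x).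
Proof.
move=> t_neq0 [Ax x_neq0 x_min]; split.
- by rewrite -scalemxAr Ax scaler0.
- by rewrite scaler_eq0 negb_or t_neq0.
- by rewrite -scalemxAr suppZ.
Qed.

Section ConformalDecomposition.
Variable L : 'cV[R]_n -> R.
Hypothesis L_lin : forall a v t, L (a + t *: v) = L a + t * L v.

Let L0 : L 0 = 0.
Proof. by have := L_lin 0 0 1; rewrite scaler0 addr0 mul1r; lra. Qed.

Let L_sub a v t : L (a - t *: v) = L a - t * L v.
Proof. by rewrite -scaleNr L_lin mulNr. Qed.

Lemma nonneg_of_proper_supp x y j : A *m x = 0 -> A *m y = 0 ->
  supp (B *m y) \proper supp (B *m x) -> 0 < (B *m x) j 0 * (B *m y) j 0 ->
  (forall z, A *m z = 0 -> conform (B *m z) (B *m x) ->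
     supp (B *m z) \proper supp (B *m x) -> 0 <= L z) ->
  0 <= L x.
Proof.
move=> Ax Ay yx xy_gt0 L_smaller.
have shrink z i : A *m z = 0 -> supp (B *m z) \proper supp (B *m x) ->
    0 < (B *m x) i 0 * (B *m z) i 0 -> exists2 t, 0 < t & 0 <= L (x - t *: z).
  move=> Az /proper_sub zx xz_gt0.
  have [t t_gt0 [qx q_lt]] := conform_shrink zx xz_gt0.
  exists t => //; apply: L_smaller; rewrite ?mulmxBr -?scalemxAr //.
  by rewrite Ax Az scaler0 subrr.
have [t t_gt0 Lq] := shrink y j Ay yx xy_gt0.
have [yx_sign|] := boolP [forall i, 0 <= (B *m y) i 0 * (B *m x) i 0].
  have yx_conf : conform (B *m y) (B *m x).
    by move=> i; split; [apply: supp_subset0 (proper_sub yx) | exact: (forallP yx_sign i)].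
  have := L_lin (x - t *: y) y t; rewrite subrK => ->.
  by rewrite addr_ge0 // mulr_ge0 ?(ltW t_gt0) ?L_smaller.
rewrite negb_forall => /existsP [i]; rewrite -ltNge => yx_lt0.
have [s s_gt0 Lp] : exists2 s, 0 < s & 0 <= L (x - s *: - y).
  apply: (shrink _ i); rewrite ?mulmxN ?Ay ?oppr0 ?suppN //.
  by rewrite [X in _ * X]mxE mulrN oppr_gt0 mulrC.
move: Lp Lq; rewrite scalerN -scaleNr !L_sub mulNr opprK => Lp Lq.
have : 0 <= t * (L x + s * L y) + s * (L x - t * L y).
  by rewrite addr_ge0 // mulr_ge0 // ltW.
have -> : t * (L x + s * L y) + s * (L x - t * L y) = (t + s) * L x by ring.
by rewrite pmulr_rge0 // addr_gt0.
Qed.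

Lemma elementary_conform_nonneg x : A *m x = 0 ->
  (forall e, elementary e -> conform (B *m e) (B *m x) -> 0 <= L e) -> 0 <= L x.
Proof.
have [N] := ubnP #|supp (B *m x)|; elim: N x => // N IH x supp_x Ax L_elem.
have [->|x_neq0] := eqVneq x 0; first by rewrite L0.
have [[y [Ay y_neq0 yx]]|x_min] := classic (exists y,
    [/\ A *m y = 0, y != 0 & supp (B *m y) \proper supp (B *m x)]); last first.
  by apply: L_elem; [split | exact: conform_refl].
have L_smaller z : A *m z = 0 -> conform (B *m z) (B *m x) ->
    supp (B *m z) \proper supp (B *m x) -> 0 <= L z.
  move=> Az zx /proper_card zx_lt; apply: IH => // [|e e_el ez].
    by apply: leq_trans zx_lt _; rewrite -ltnS.
  exact: L_elem e_el (conform_trans ez zx).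
have /set0Pn [j] := ker_supp_neq0 Ay y_neq0; rewrite inE => yj.
have /subsetP/(_ j) := proper_sub yx; rewrite !inE => /(_ yj) xj.
have [xy_gt0|xy_lt0|/eqP] := ltrgt0P ((B *m x) j 0 * (B *m y) j 0).
- exact: nonneg_of_proper_supp Ax Ay yx xy_gt0 L_smaller.
- apply: (@nonneg_of_proper_supp x (- y) j) L_smaller;
    rewrite ?mulmxN ?suppN ?Ay ?oppr0 //.
  by rewrite [X in _ * X]mxE mulrN oppr_gt0.
- by rewrite mulf_eq0 (negbTE xj) (negbTE yj).
Qed.

End ConformalDecomposition.
End ElementaryVectors.

Section Circuits.
Variables (R : realFieldType) (mA mB n : nat) (A : 'M[rat]_(mA, n)) (B : 'M[rat]_(mB, n)).
Hypothesis A_B_pointed : pointed A B.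
Local Notation AR := (AR R A).
Local Notation BR := (BR R B).

Lemma pointed_inj (y : 'cV[R]_n) : AR *m y = 0 -> BR *m y = 0 -> y = 0.
Proof.
move=> Ay By; apply/eqP; apply: contraT => y_neq0.
have /mxrank_lt_colP : exists2 z : 'cV[R]_n, z != 0 & map_mx ratr (col_mx A B) *m z = 0.
  by exists y; rewrite // map_col_mx mul_col_mx Ay By col_mx0.
by rewrite mxrank_map A_B_pointed ltnn.
Qed.

Lemma obj_ratioZ (c : 'cV[R]_n) lam (v : 'cV[R]_n) :
  0 < lam -> obj_ratio B c (lam *: v) = obj_ratio B c v.
Proof.
move=> lam_gt0; rewrite /obj_ratio /dotc /norm1 -scalemxAr.
under eq_bigr do rewrite mxE mulrCA.
under [X in _ / X]eq_bigr do rewrite mxE normrM gtr0_norm //.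
by rewrite -!mulr_sumr invfM mulrACA divff ?mul1r ?gt_eqF.
Qed.

Lemma ler_obj_ratio (c : 'cV[R]_n) r v : v != 0 -> AR *m v = 0 ->
  (r <= obj_ratio B c v) = (r * norm1 (BR *m v) <= dotc c v).
Proof.
move=> v_neq0 Av; rewrite ler_pdivlMr // norm1_gt0.
by apply: contraNneq v_neq0 => /(pointed_inj Av) ->.
Qed.

Definition rows_off (S : {set 'I_mB}) : 'M[rat]_(mB, n) :=
  \matrix_(i, j) if i \in S then 0 else B i j.

Lemma rows_off_mul_eq0 S (z : 'cV[R]_n) :
  (map_mx ratr (rows_off S) *m z == 0) = (supp (BR *m z) \subset S).
Proof.
apply/eqP/subsetP => [Nz i|zS].
  rewrite inE; apply: contraR => iS; apply/eqP.
  transitivity ((map_mx ratr (rows_off S) *m z) i 0); last by rewrite Nz mxE.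
  rewrite !mxE; apply: eq_bigr => j _.
  by rewrite !mxE (negbTE iS).
apply/matrixP => i j; rewrite ord1 !mxE; have [iS|iS] := boolP (i \in S).
  by rewrite big1 // => k _; rewrite !mxE iS rmorph0 mul0r.
have := contra (zS i) iS; rewrite inE negbK => /eqP zi.
transitivity ((BR *m z) i 0); last by rewrite zi.
by rewrite mxE; apply: eq_bigr => k _; rewrite !mxE (negbTE iS).
Qed.

Lemma elementary_rat_multiple (x : 'cV[R]_n) : elementary AR BR x ->
  exists z : 'cV[rat]_n, exists2 mu : R, mu != 0 & map_mx ratr z = mu *: x /\ z != 0.
Proof.
move=> x_el; have [Ax x_neq0 _] := x_el.
pose M := col_mx A (rows_off (supp (BR *m x))).
have kerM (z : 'cV[R]_n) :
    (map_mx ratr M *m z == 0) = (AR *m z == 0) && (supp (BR *m z) \subset supp (BR *m x)).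
  by rewrite map_col_mx mul_col_mx col_mx_eq0 rows_off_mul_eq0.
(* the real kernel of M is the line through x, and its rank does not change over Q *)
have /mxrank_lt_colP [z z_neq0 Mz] : (\rank M < n)%N.
  rewrite -(mxrank_map (ratr : {rmorphism rat -> R})); apply/mxrank_lt_colP.
  by exists x => //; apply/eqP; rewrite kerM Ax eqxx subxx.
have /eqP := congr1 (map_mx (ratr : rat -> R)) Mz.
rewrite map_mxM map_mx0 kerM => /andP [/eqP Az zx].
have [mu z_mu] := elementary_multiple pointed_inj x_el Az zx.
exists z, mu => //; apply: contraNneq z_neq0 => mu0.
by move: z_mu; rewrite mu0 scale0r => /eqP; rewrite map_mx_eq0.
Qed.

Lemma circuit_of_elementary (h : 'cV[int]_n) :
  \big[gcdz/0]_i h i 0 = 1 -> elementary AR BR (intvR R h) -> is_circuit R A B h.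
Proof.
move=> gcd_h [Ah h_neq0 h_min]; split=> //.
by apply: contraNneq h_neq0 => ->; rewrite /intvR map_mx0.
Qed.

Lemma elementary_circuit_multiple (x : 'cV[R]_n) : elementary AR BR x ->
  exists h : 'cV[int]_n, exists2 lam : R, 0 < lam & is_circuit R A B h /\ x = lam *: intvR R h.
Proof.
move=> x_el; have [z [mu mu_neq0 [z_mu z_neq0]]] := elementary_rat_multiple x_el.
have [h [k k_gt0 [z_kh gcd_h]]] := rat_vec_primitive_multiple R z_neq0.
have x_h : x = (k / mu) *: intvR R h.
  by rewrite mulrC -scalerA -z_kh z_mu scalerA mulVf ?scale1r.
suff [h' [lam lam_gt0 [gcd_h' x_h']]] : exists h' : 'cV[int]_n, exists2 lam : R,
    0 < lam & \big[gcdz/0]_i h' i 0 = 1 /\ x = lam *: intvR R h'.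
  exists h', lam => //; split=> //; apply: circuit_of_elementary => //.
  have -> : intvR R h' = lam^-1 *: x by rewrite x_h' scalerA mulVf ?scale1r ?gt_eqF.
  by apply: elementaryZ; rewrite ?invr_eq0 ?gt_eqF.
have [lam_gt0|lam_lt0|/eqP] := ltrgt0P (k / mu); first by exists h, (k / mu).
  exists (- h), (- (k / mu)); rewrite ?oppr_gt0 //; split.
    by rewrite -[RHS]gcd_h -[in RHS]big_gcdzN; apply: eq_bigr => i _; rewrite mxE.
  by rewrite /intvR map_mxN scalerN -scaleNr opprK.
by rewrite mulf_eq0 invr_eq0 (negbTE mu_neq0) orbF gt_eqF.
Qed.

End Circuits.

Section Feasibility.
Variables (R : realFieldType) (mA mB n : nat) (A : 'M[rat]_(mA, n)) (B : 'M[rat]_(mB, n)).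
Variables (b : 'cV[R]_mA) (d : 'cV[R]_mB) (x0 : 'cV[R]_n).
Hypothesis x0_in_P : in_P A B b d x0.
Local Notation AR := (AR R A).
Local Notation BR := (BR R B).

Lemma feasible_dir_ker u : feasible_dir A B b d x0 u -> AR *m u = 0.
Proof.
case=> beta [beta_gt0 [Au _]]; have [Ax0 _] := x0_in_P.
move: Au; rewrite mulmxDr Ax0 -scalemxAr => /(canRL (addKr b)); rewrite addNr.
by move/eqP; rewrite scaler_eq0 gt_eqF // => /eqP.
Qed.

Lemma feasible_dir_conform u v : feasible_dir A B b d x0 u ->
  AR *m v = 0 -> conform (BR *m v) (BR *m u) -> feasible_dir A B b d x0 v.
Proof.
case=> beta [beta_gt0 [_ Bu_le]] Av vu; have [Ax0 Bx0_le] := x0_in_P.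
have [t t_gt0 vu_bound] := conform_scale_bound vu.
exists (beta * t); split; first exact: mulr_gt0.
split=> [|j]; first by rewrite mulmxDr -scalemxAr Av scaler0 addr0.
have := Bu_le j; rewrite !mulmxDr -!scalemxAr !colDZE => Bu_le_j.
have [Bv_le0|Bv_gt0] := lerP ((BR *m v) j 0) 0.
  apply: le_trans (Bx0_le j); rewrite gerDl mulr_ge0_le0 // ltW //.
  exact: mulr_gt0.
have Bu_gt0 : 0 < (BR *m u) j 0.
  have [u0_v0 vu_ge0] := vu j; rewrite lt_def -(pmulr_rge0 _ Bv_gt0) vu_ge0 andbT.
  by apply: contraTneq Bv_gt0 => /u0_v0 ->; rewrite ltxx.
apply: le_trans Bu_le_j; rewrite lerD2l -mulrA ler_pM2l //.
by have := vu_bound j; rewrite !gtr0_norm.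
Qed.

End Feasibility.

Theorem lemma2 (R : realFieldType) (mA mB n : nat)
  (A : 'M[rat]_(mA, n)) (B : 'M[rat]_(mB, n))
  (b : 'cV[R]_mA) (d : 'cV[R]_mB) (c : 'cV[R]_n) (x0 : 'cV[R]_n) :
  pointed A B ->
  in_P A B b d x0 ->
  forall g : 'cV[R]_n,
    steepest_descent_circuit_direction A B b d c x0 g ->
    forall u : 'cV[R]_n, u != 0 -> feasible_dir A B b d x0 u ->
      @obj_ratio R mB n B c g <= @obj_ratio R mB n B c u.
Proof.
move=> AB_pointed x0_in_P g [g0 [lam [[_ _ g0_steepest] lam_gt0 ->]]] u u_neq0 u_feas.
rewrite obj_ratioZ //; set r := obj_ratio B c (intvR R g0).
have Au := feasible_dir_ker x0_in_P u_feas.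
pose L x := dotc c x - r * \sum_j Num.sg ((BR R B *m u) j 0) * (BR R B *m x) j 0.
have L_lin a v t : L (a + t *: v) = L a + t * L v.
  by rewrite /L /dotc mulmxDr -scalemxAr !sum_mulDZ; ring.
have L_ge0E v : v != 0 -> AR R A *m v = 0 -> conform (BR R B *m v) (BR R B *m u) ->
    (0 <= L v) = (r <= obj_ratio B c v).
  by move=> v_neq0 Av vu; rewrite (ler_obj_ratio AB_pointed) // subr_ge0 conform_sum_sg.
rewrite -L_ge0E //; last exact: conform_refl.
apply: (elementary_conform_nonneg (pointed_inj AB_pointed) L_lin Au) => e e_el eu.
have [Ae e_neq0 _] := e_el; rewrite L_ge0E //.
have [h [mu mu_gt0 [h_circ e_h]]] := elementary_circuit_multiple AB_pointed e_el.
have [_ Ah _ _] := h_circ; rewrite e_h obj_ratioZ //; apply: (g0_steepest _ h_circ).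
apply: (feasible_dir_conform x0_in_P u_feas Ah).
have mu_inv_ge0 : 0 <= mu^-1 by rewrite invr_ge0 ltW.
have := conformZ mu_inv_ge0 eu.
by rewrite scalemxAr e_h scalerA mulVf ?gt_eqF ?scale1r.
Qed.
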